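(* As $N\to\infty$, $$R_N:=\sum_{n=1}^N\Big\{\frac{1}{2^{2n}}\binom{2n}{n}\Big\}^2=\frac{\log N+\alpha}{\pi}+o(1),\qquad\alpha:=\gamma+\log16-\pi,$$ where $\gamma$ is the Euler–Mascheroni constant.
   Context: $\gamma=-\int_0^\infty\log u\,e^{-u}\mathrm du$. *)

From Stdlib Require Import Reals.
Open Scope R_scope.

Definition improper_int_0_inf (f : R -> R) (l : R) : Prop :=
  forall eps : R, 0 < eps ->
  exists d M : R, 0 < d /\ 0 < M /\
    forall a b : R, 0 < a < d -> M < b ->
      exists pr : Riemann_integrable f a b, Rabs (RiemannInt pr - l) < eps.

Definition is_euler_gamma (g : R) : Prop :=
  improper_int_0_inf (fun u => ln u * exp (- u)) (- g).

Definition cb_term (n : nat) : R := (C (2 * n) n / 2 ^ (2 * n)) ^ 2.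

Definition R_N (N : nat) : R :=
  match N with
  | O => 0
  | S m => sum_f_R0 (fun k => cb_term (S k)) m
  end.

Definition alpha (g : R) : R := g + ln 16 - PI.

From Coquelicot Require Import Coquelicot.
From Stdlib Require Import Reals Lra Lia.
Open Scope R_scope.

(* Write c_n = binom(2n,n)/4^n. The Wallis integrals of sin^(2n) and sin^(2n+1) over
   [0, pi/2] are (pi/2) c_n and 1/((2n+1) c_n), so for
   Q_N(t) = sum_{k<N} 2 c_(k+1) sin(t)^(2k+1) one gets
   int_0^(pi/2) (1 - sin t) Q_N(t) dt = H_N - pi R_N.
   Since sum_k c_k s^(2k) = (1 - s^2)^(-1/2), Q_N truncates 2 (1/cos t - 1) / sin t, and
   (1 - sin t) times the latter is 2 sin t cos t / ((1 + sin t)(1 + cos t)), whose integral is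
   pi - 4 log 2; comparing cos t with the partial sums of the series by monotonicity bounds
   the truncation error by 2 c_(N+1) -> 0. Hence pi R_N = H_N - pi + 4 log 2 + o(1).
   Finally H_N - log N -> gamma: H_N = int_0^N (1 - (1 - u/N)^N) / u du, and replacing
   (1 - u/N)^N by e^(-u) costs O(1/N), after which an integration by parts produces
   int_0^oo log u e^(-u) du. *)

Lemma is_RInt_derive_le (F f : R -> R) (a b : R) : a <= b ->
  (forall x, a <= x <= b -> is_derive F x (f x)) ->
  (forall x, a <= x <= b -> continuous f x) ->
  is_RInt f a b (F b - F a).
Proof.
  intros Hab HF Hf.
  apply (is_RInt_derive F f); intros x Hx; rewrite Rmin_left, Rmax_right in Hx by lra; auto.
Qed.

Lemma continuous_of_ex_derive (f : R -> R) (x : R) : ex_derive f x -> continuous f x.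
Proof. exact (ex_derive_continuous f x). Qed.

Lemma is_RInt_ext_le (f g : R -> R) (a b I : R) : a <= b ->
  (forall x, a <= x <= b -> f x = g x) -> is_RInt f a b I -> is_RInt g a b I.
Proof.
  intros Hab Hfg. apply is_RInt_ext.
  intros x Hx; rewrite Rmin_left, Rmax_right in Hx by lra; apply Hfg; lra.
Qed.

Lemma is_RInt_const_bounds (f : R -> R) (a b I lo hi : R) : a <= b -> is_RInt f a b I ->
  (forall x, a < x < b -> lo <= f x <= hi) -> (b - a) * lo <= I <= (b - a) * hi.
Proof.
  intros Hab HI Hf; split.
  - apply (is_RInt_le (fun _ => lo) f a b); auto; [apply (is_RInt_const (V := R_NormedModule))|].
    intros x Hx; apply Hf, Hx.
  - apply (is_RInt_le f (fun _ => hi) a b); auto; [apply (is_RInt_const (V := R_NormedModule))|].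
    intros x Hx; apply Hf, Hx.
Qed.

Lemma is_lim_seq_inv_INR : is_lim_seq (fun n => / INR n) 0.
Proof. exact (is_lim_seq_inv _ _ is_lim_seq_INR ltac:(discriminate)). Qed.

Lemma PI2_gt_0 : 0 < PI / 2.
Proof. generalize PI_RGT_0; lra. Qed.

Definition central_ratio (n : nat) : R := C (2 * n) n / 2 ^ (2 * n).

Lemma central_ratio_0 : central_ratio 0 = 1.
Proof. unfold central_ratio, C; simpl; field. Qed.

Lemma central_ratio_S n :
  central_ratio (S n) = central_ratio n * (2 * INR n + 1) / (2 * INR n + 2).
Proof.
  unfold central_ratio, C.
  replace (2 * S n - S n)%nat with (S n) by lia.
  replace (2 * n - n)%nat with n by lia.
  replace (2 * S n)%nat with (S (S (2 * n))) by lia.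
  rewrite !fact_simpl, !mult_INR, <- !tech_pow_Rmult, !S_INR, mult_INR; simpl INR.
  assert (H1 := INR_fact_neq_0 n); assert (H2 := INR_fact_neq_0 (2 * n)).
  assert (H3 : 0 < 2 ^ (2 * n)) by (apply pow_lt; lra).
  assert (H4 := pos_INR n).
  field; repeat split; lra.
Qed.

Lemma central_ratio_pos n : 0 < central_ratio n.
Proof.
  induction n as [|n IH]; [rewrite central_ratio_0; lra|].
  rewrite central_ratio_S; assert (H := pos_INR n).
  apply Rdiv_lt_0_compat; [apply Rmult_lt_0_compat|]; lra.
Qed.

Lemma central_ratio_sqr_le n : central_ratio n ^ 2 <= / (INR n + 1).
Proof.
  induction n as [|n IH]; [rewrite central_ratio_0; simpl; lra|].
  rewrite central_ratio_S, S_INR; assert (Hn := pos_INR n); set (x := INR n) in *.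
  replace ((central_ratio n * (2 * x + 1) / (2 * x + 2)) ^ 2)
    with (central_ratio n ^ 2 * ((2 * x + 1) / (2 * x + 2)) ^ 2) by (field; lra).
  apply Rle_trans with (/ (x + 1) * ((2 * x + 1) / (2 * x + 2)) ^ 2).
  - apply Rmult_le_compat_r; [apply pow2_ge_0|exact IH].
  - replace (/ (x + 1) * ((2 * x + 1) / (2 * x + 2)) ^ 2)
      with ((2 * x + 1) ^ 2 / (4 * (x + 1) ^ 3)) by (field; lra).
    apply Rcomplements.Rle_div_l; [nra|].
    replace (/ (x + 1 + 1) * (4 * (x + 1) ^ 3))
      with ((2 * x + 1) ^ 2 + (3 * x + 2) / (x + 2)) by (field; lra).
    assert (0 <= (3 * x + 2) / (x + 2)) by (apply Rcomplements.Rdiv_le_0_compat; lra).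
    lra.
Qed.

Lemma is_lim_seq_central_ratio : is_lim_seq central_ratio 0.
Proof.
  apply (is_lim_seq_le_le (fun _ => 0) _ (fun n => sqrt (/ INR (S n)))).
  - intros n; assert (Hc := central_ratio_pos n); split; [lra|].
    rewrite <- (sqrt_pow2 (central_ratio n)) by lra.
    apply sqrt_le_1_alt; rewrite S_INR; apply central_ratio_sqr_le.
  - apply is_lim_seq_const.
  - replace (Finite 0) with (Finite (sqrt 0)) by (rewrite sqrt_0; reflexivity).
    apply is_lim_seq_continuous; [apply continuity_pt_sqrt; lra|].
    apply (is_lim_seq_incr_1 (fun n => / INR n)), is_lim_seq_inv_INR.
Qed.

Lemma is_RInt_sin_pow_SS m I : is_RInt (fun t => sin t ^ m) 0 (PI / 2) I ->
  is_RInt (fun t => sin t ^ S (S m)) 0 (PI / 2) (INR (S m) / INR (S (S m)) * I).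
Proof.
  intros HI; assert (HP := PI2_gt_0).
  set (k := INR (S m) / INR (S (S m))).
  assert (Hm := pos_INR m).
  set (F := fun t => - cos t * sin t ^ S m / INR (S (S m))).
  assert (Hrest : is_RInt (fun t => sin t ^ S (S m) - k * sin t ^ m) 0 (PI / 2)
                    (F (PI / 2) - F 0)).
  { apply is_RInt_derive_le; [lra| |].
    - intros t _; unfold F; auto_derive; [auto|].
      change (match m with 0%nat => 1 | S _ => INR m + 1 end) with (INR (S m)).
      unfold k; rewrite !S_INR in *.
      field_simplify; [|lra..].
      replace (cos t ^ 2) with (1 - sin t ^ 2) by (rewrite <- (sin2_cos2 t); unfold Rsqr; ring).
      simpl; field; lra.
    - intros x _; apply continuous_of_ex_derive; auto_derive; auto. }
  replace (F (PI / 2) - F 0) with 0 in Hrest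
    by (unfold F; rewrite cos_PI2, sin_0, !S_INR; simpl pow; field; lra).
  apply (is_RInt_ext_le (fun t => k * sin t ^ m + (sin t ^ S (S m) - k * sin t ^ m)));
    [lra|intros; ring|].
  replace (k * I) with (k * I + 0) by ring.
  apply (is_RInt_plus (V := R_NormedModule)); [|exact Hrest].
  apply (is_RInt_scal (V := R_NormedModule)), HI.
Qed.

Lemma is_RInt_sin_pow_even n :
  is_RInt (fun t => sin t ^ (2 * n)) 0 (PI / 2) (PI / 2 * central_ratio n).
Proof.
  induction n as [|n IH].
  - rewrite central_ratio_0, Rmult_1_r.
    replace (PI / 2) with ((PI / 2 - 0) * 1) at 2 by ring.
    apply (is_RInt_ext_le (fun _ => 1)); [generalize PI2_gt_0; lra|reflexivity|].
    apply (is_RInt_const (V := R_NormedModule)).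
  - replace (2 * S n)%nat with (S (S (2 * n))) by lia.
    replace (PI / 2 * central_ratio (S n))
      with (INR (S (2 * n)) / INR (S (S (2 * n))) * (PI / 2 * central_ratio n)).
    + exact (is_RInt_sin_pow_SS _ _ IH).
    + rewrite central_ratio_S, !S_INR, mult_INR; simpl INR.
      assert (Hn := pos_INR n); field; lra.
Qed.

Lemma is_RInt_sin_pow_odd n :
  is_RInt (fun t => sin t ^ (2 * n + 1)) 0 (PI / 2) (/ ((2 * INR n + 1) * central_ratio n)).
Proof.
  induction n as [|n IH].
  - rewrite central_ratio_0; simpl INR.
    replace (/ ((2 * 0 + 1) * 1)) with (- cos (PI / 2) - - cos 0)
      by (rewrite cos_PI2, cos_0; field).
    apply (is_RInt_derive_le (fun t => - cos t)); [generalize PI2_gt_0; lra| |].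
    + intros t _; auto_derive; [auto|simpl; ring].
    + intros t _; apply continuous_of_ex_derive; auto_derive; auto.
  - replace (2 * S n + 1)%nat with (S (S (2 * n + 1))) by lia.
    replace (/ ((2 * INR (S n) + 1) * central_ratio (S n)))
      with (INR (S (2 * n + 1)) / INR (S (S (2 * n + 1)))
            * / ((2 * INR n + 1) * central_ratio n)).
    + exact (is_RInt_sin_pow_SS _ _ IH).
    + rewrite central_ratio_S, !S_INR, plus_INR, mult_INR; simpl INR.
      assert (Hc' := central_ratio_pos n); assert (Hn' := pos_INR n).
      field; repeat split; lra.
Qed.

Fixpoint harmonic (N : nat) : R :=
  match N with O => 0 | S k => harmonic k + / INR (S k) end.

Fixpoint sin_odd_sum (N : nat) (t : R) : R :=
  match N with
  | O => 0
  | S k => sin_odd_sum k t + 2 * central_ratio (S k) * sin t ^ (2 * k + 1)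
  end.

Lemma R_N_S N : R_N (S N) = R_N N + central_ratio (S N) ^ 2.
Proof. destruct N; [apply eq_sym, Rplus_0_l|reflexivity]. Qed.

Lemma is_RInt_one_minus_sin_odd_sum N :
  is_RInt (fun t => (1 - sin t) * sin_odd_sum N t) 0 (PI / 2) (harmonic N - PI * R_N N).
Proof.
  assert (HP := PI2_gt_0).
  induction N as [|N IH].
  - replace (harmonic 0 - PI * R_N 0) with ((PI / 2 - 0) * 0) by (simpl; ring).
    apply (is_RInt_ext_le (fun _ => 0)); [lra|intros; simpl; ring|].
    apply (is_RInt_const (V := R_NormedModule)).
  - set (c := central_ratio (S N)).
    assert (Hodd := is_RInt_scal _ _ _ (2 * c) _ (is_RInt_sin_pow_odd N)).
    assert (Heven := is_RInt_scal _ _ _ (2 * c) _ (is_RInt_sin_pow_even (S N))).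
    assert (H := is_RInt_plus _ _ _ _ _ _ IH (is_RInt_minus _ _ _ _ _ _ Hodd Heven)).
    replace (harmonic (S N) - PI * R_N (S N))
      with (harmonic N - PI * R_N N + (2 * c * / ((2 * INR N + 1) * central_ratio N)
              - 2 * c * (PI / 2 * central_ratio (S N)))).
    + refine (is_RInt_ext_le _ _ 0 (PI / 2) _ _ _ H); [lra|].
      intros t _; simpl sin_odd_sum.
      replace (2 * S N)%nat with (S (2 * N + 1)) by lia; simpl pow.
      unfold c; cbn; ring.
    + rewrite R_N_S; cbn [harmonic]; unfold c; rewrite central_ratio_S, !S_INR.
      assert (Hn := pos_INR N); assert (Hc := central_ratio_pos N).
      field; repeat split; lra.
Qed.

Definition sin_cos_kernel (t : R) : R := 2 * sin t * cos t / ((1 + sin t) * (1 + cos t)).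

Lemma is_RInt_sin_cos_kernel : is_RInt sin_cos_kernel 0 (PI / 2) (PI - 4 * ln 2).
Proof.
  set (F := fun t => 2 * t - 2 * ln (1 + sin t) + 2 * ln (1 + cos t)).
  replace (PI - 4 * ln 2) with (F (PI / 2) - F 0).
  2:{ unfold F; rewrite sin_PI2, cos_PI2, sin_0, cos_0, Rplus_0_r, ln_1.
      replace (1 + 1) with 2 by ring; field. }
  assert (Hbounds : forall t, 0 <= t <= PI / 2 -> 0 <= sin t /\ 0 <= cos t).
  { intros t Ht; generalize PI_RGT_0; split; [apply sin_ge_0|apply cos_ge_0]; lra. }
  apply is_RInt_derive_le; [generalize PI2_gt_0; lra| |].
  - intros t Ht; destruct (Hbounds t Ht) as [Hs Hc]; unfold F, sin_cos_kernel.
    auto_derive; [repeat split; lra|].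
    field_simplify; [|lra..].
    replace (cos t ^ 2) with (1 - sin t ^ 2) by (rewrite <- (sin2_cos2 t); unfold Rsqr; ring).
    f_equal; ring.
  - intros x Hx; destruct (Hbounds x Hx) as [Hs Hc].
    apply continuous_of_ex_derive; unfold sin_cos_kernel; auto_derive.
    repeat split; try lra; apply Rmult_integral_contrapositive; split; lra.
Qed.

Fixpoint inv_sqrt_taylor (N : nat) (s : R) : R :=
  match N with
  | O => 1
  | S k => inv_sqrt_taylor k s + central_ratio (S k) * s ^ (2 * k + 2)
  end.

Lemma inv_sqrt_taylor_0 N : inv_sqrt_taylor N 0 = 1.
Proof.
  induction N as [|N IH]; [reflexivity|].
  cbn [inv_sqrt_taylor]; rewrite IH, pow_i by lia; ring.
Qed.

Lemma sin_mul_odd_sum N t : sin t * sin_odd_sum N t = 2 * (inv_sqrt_taylor N (sin t) - 1).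
Proof.
  induction N as [|N IH]; [simpl; ring|].
  cbn [sin_odd_sum inv_sqrt_taylor].
  replace (2 * N + 2)%nat with (S (2 * N + 1)) by lia; rewrite <- tech_pow_Rmult.
  rewrite Rmult_plus_distr_l, IH; ring.
Qed.

Lemma is_derive_cos_mul_sin_pow m t :
  is_derive (fun t => cos t * sin t ^ S m) t
    (INR (S m) * sin t ^ m - INR (S (S m)) * sin t ^ S (S m)).
Proof.
  auto_derive; [auto|].
  change (match m with 0%nat => 1 | S _ => INR m + 1 end) with (INR (S m)).
  rewrite !S_INR; simpl pow; ring_simplify.
  replace (cos t ^ 2) with (1 - sin t ^ 2) by (rewrite <- (sin2_cos2 t); unfold Rsqr; ring).
  ring.
Qed.

Lemma is_derive_cos_mul_inv_sqrt_taylor N t :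
  is_derive (fun t => cos t * inv_sqrt_taylor N (sin t)) t
    (- (2 * INR N + 1) * central_ratio N * sin t ^ (2 * N + 1)).
Proof.
  induction N as [|N IH].
  - simpl inv_sqrt_taylor; auto_derive; [auto|rewrite central_ratio_0; simpl; ring].
  - set (c := central_ratio (S N)).
    assert (H := is_derive_plus _ _ _ _ _ IH
                   (is_derive_scal _ _ c _ (is_derive_cos_mul_sin_pow (2 * N + 1) t))).
    replace (- (2 * INR (S N) + 1) * c * sin t ^ (2 * S N + 1))
      with (- (2 * INR N + 1) * central_ratio N * sin t ^ (2 * N + 1)
            + c * (INR (S (2 * N + 1)) * sin t ^ (2 * N + 1)
                   - INR (S (S (2 * N + 1))) * sin t ^ S (S (2 * N + 1)))).
    + refine (is_derive_ext _ _ _ _ _ H); intros u; cbn [inv_sqrt_taylor].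
      replace (2 * N + 2)%nat with (S (2 * N + 1)) by lia.
      unfold c; cbn; ring.
    + replace (2 * S N + 1)%nat with (S (S (2 * N + 1))) by lia.
      unfold c; rewrite central_ratio_S, !S_INR, plus_INR, mult_INR; simpl INR.
      assert (Hn := pos_INR N); field; lra.
Qed.

Lemma is_derive_sin_pow_div_cos m t : cos t <> 0 ->
  is_derive (fun t => sin t ^ S m / cos t) t
    (INR (S m) * sin t ^ m + sin t ^ S (S m) / cos t ^ 2).
Proof.
  intros Hc; auto_derive; [auto|].
  change (match m with 0%nat => 1 | S _ => INR m + 1 end) with (INR (S m)).
  simpl pow; field; auto.
Qed.

Lemma nondecreasing_of_is_derive (f df : R -> R) (a b : R) : a <= b ->
  (forall x, a <= x <= b -> is_derive f x (df x)) ->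
  (forall x, a <= x <= b -> 0 <= df x) -> f a <= f b.
Proof.
  intros Hab Hf Hdf.
  destruct (MVT_gen f a b df) as [c [Hc Hmvt]]; rewrite ?Rmin_left, ?Rmax_right in * by lra.
  - intros x Hx; apply Hf; lra.
  - intros x Hx; apply continuity_pt_filterlim, continuous_of_ex_derive.
    exists (df x); apply Hf; lra.
  - assert (Hd := Hdf c Hc); nra.
Qed.

Lemma cos_mul_inv_sqrt_taylor_le_1 N t : 0 <= t <= PI / 2 ->
  cos t * inv_sqrt_taylor N (sin t) <= 1.
Proof.
  intros Ht.
  enough (- 1 <= - (cos t * inv_sqrt_taylor N (sin t))) by lra.
  replace (- 1) with (- (cos 0 * inv_sqrt_taylor N (sin 0)))
    by (rewrite cos_0, sin_0, inv_sqrt_taylor_0; ring).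
  apply (nondecreasing_of_is_derive (fun u => - (cos u * inv_sqrt_taylor N (sin u)))
           (fun u => (2 * INR N + 1) * central_ratio N * sin u ^ (2 * N + 1))); [lra| |].
  - intros u _.
    replace ((2 * INR N + 1) * central_ratio N * sin u ^ (2 * N + 1))
      with (opp (- (2 * INR N + 1) * central_ratio N * sin u ^ (2 * N + 1)))
      by (cbn; ring).
    apply (is_derive_opp (fun u => cos u * inv_sqrt_taylor N (sin u))).
    apply is_derive_cos_mul_inv_sqrt_taylor.
  - intros u Hu; assert (Hs : 0 <= sin u) by (apply sin_ge_0; generalize PI_RGT_0; lra).
    assert (Hn := pos_INR N); assert (Hc := central_ratio_pos N).
    apply Rmult_le_pos; [apply Rmult_le_pos|apply pow_le]; lra.
Qed.

Lemma one_le_cos_mul_inv_sqrt_taylor_add N t : 0 <= t < PI / 2 ->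
  1 <= cos t * inv_sqrt_taylor N (sin t)
       + central_ratio (S N) * (sin t ^ S (2 * N + 1) / cos t).
Proof.
  intros Ht; set (c := central_ratio (S N)).
  assert (Hcos : forall u, 0 <= u <= t -> 0 < cos u)
    by (intros u Hu; apply cos_gt_0; generalize PI_RGT_0; lra).
  replace 1 with (cos 0 * inv_sqrt_taylor N (sin 0) + c * (sin 0 ^ S (2 * N + 1) / cos 0)) at 1
    by (rewrite cos_0, sin_0, inv_sqrt_taylor_0, pow_i by lia; field).
  apply (nondecreasing_of_is_derive
           (fun u => cos u * inv_sqrt_taylor N (sin u) + c * (sin u ^ S (2 * N + 1) / cos u))
           (fun u => c * (sin u ^ S (S (2 * N + 1)) / cos u ^ 2)));
    [lra| |].
  - intros u Hu.
    assert (H := is_derive_plus _ _ _ _ _ (is_derive_cos_mul_inv_sqrt_taylor N u)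
                   (is_derive_scal _ _ c _ (is_derive_sin_pow_div_cos (2 * N + 1) u
                                             (Rgt_not_eq _ _ (Hcos u Hu))))).
    replace (c * (sin u ^ S (S (2 * N + 1)) / cos u ^ 2))
      with (- (2 * INR N + 1) * central_ratio N * sin u ^ (2 * N + 1)
            + c * (INR (S (2 * N + 1)) * sin u ^ (2 * N + 1)
                   + sin u ^ S (S (2 * N + 1)) / cos u ^ 2)); [exact H|].
    unfold c; rewrite central_ratio_S, !S_INR, plus_INR, mult_INR; simpl INR.
    assert (Hn := pos_INR N); assert (Hcu := Hcos u Hu); field; split; lra.
  - intros u Hu; assert (Hs : 0 <= sin u) by (apply sin_ge_0; generalize PI_RGT_0; lra).
    assert (Hc := central_ratio_pos (S N)); fold c in Hc; assert (Hcu := Hcos u Hu).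
    apply Rmult_le_pos; [lra|apply Rcomplements.Rdiv_le_0_compat; [apply pow_le|apply pow_lt]; lra].
Qed.

Lemma sin_cos_kernel_sub_eq s c P Q : 0 < s -> 0 < c -> s ^ 2 + c ^ 2 = 1 ->
  s * Q = 2 * (P - 1) ->
  2 * s * c / ((1 + s) * (1 + c)) - (1 - s) * Q = 2 * (1 - s) * (1 - c * P) / (s * c).
Proof.
  intros Hs Hc Hsc HQ.
  replace Q with (2 * (P - 1) / s) by (rewrite <- HQ; field; lra).
  replace (2 * s * c / ((1 + s) * (1 + c)))
    with (2 * ((1 - s) * (1 + s)) * ((1 - c) * (1 + c)) / (s * c * (1 + s) * (1 + c))).
  - field; lra.
  - replace ((1 - s) * (1 + s)) with (c ^ 2) by lra.
    replace ((1 - c) * (1 + c)) with (s ^ 2) by lra.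
    field; lra.
Qed.

Lemma sin_cos_kernel_sub_odd_sum_bounds N t : 0 < t < PI / 2 ->
  0 <= sin_cos_kernel t - (1 - sin t) * sin_odd_sum N t <= 2 * central_ratio (S N).
Proof.
  intros Ht; assert (HP := PI_RGT_0).
  assert (Hs : 0 < sin t) by (apply sin_gt_0; lra).
  assert (Hs1 : sin t <= 1) by apply SIN_bound.
  assert (Hc : 0 < cos t) by (apply cos_gt_0; lra).
  assert (Hsc : sin t ^ 2 + cos t ^ 2 = 1) by (rewrite <- (sin2_cos2 t); unfold Rsqr; ring).
  assert (Hq := central_ratio_pos (S N)).
  assert (Hle := cos_mul_inv_sqrt_taylor_le_1 N t ltac:(lra)).
  assert (Hge := one_le_cos_mul_inv_sqrt_taylor_add N t ltac:(lra)).
  set (q := central_ratio (S N)) in *; set (x := sin t ^ (2 * N + 1)).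
  assert (Hx : 0 <= x <= 1).
  { split; [apply pow_le; lra|rewrite <- (pow1 (2 * N + 1)); apply pow_incr; lra]. }
  unfold sin_cos_kernel; rewrite (sin_cos_kernel_sub_eq _ _ (inv_sqrt_taylor N (sin t)))
    by (auto; apply sin_mul_odd_sum).
  set (P := inv_sqrt_taylor N (sin t)) in *.
  rewrite <- tech_pow_Rmult in Hge; fold x in Hge.
  split.
  - apply Rmult_le_pos; [apply Rmult_le_pos; lra|apply Rlt_le, Rinv_0_lt_compat; nra].
  - apply Rle_trans with (2 * (1 - sin t) * (q * (sin t * x / cos t)) / (sin t * cos t)).
    + unfold Rdiv; apply Rmult_le_compat_r; [apply Rlt_le, Rinv_0_lt_compat; nra|].
      apply Rmult_le_compat_l; lra.
    + replace (2 * (1 - sin t) * (q * (sin t * x / cos t)) / (sin t * cos t))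
        with (2 * q * x * (1 - sin t) / cos t ^ 2) by (field; lra).
      replace (cos t ^ 2) with ((1 - sin t) * (1 + sin t)) by nra.
      replace (2 * q * x * (1 - sin t) / ((1 - sin t) * (1 + sin t)))
        with (2 * q * (x / (1 + sin t))) by (field; nra).
      rewrite <- (Rmult_1_r (2 * q)) at 2; apply Rmult_le_compat_l; [lra|].
      apply Rcomplements.Rle_div_l; lra.
Qed.

Lemma PI_mul_R_N_bounds N :
  0 <= PI * R_N N - (harmonic N - PI + 4 * ln 2) <= PI * central_ratio (S N).
Proof.
  assert (HP := PI2_gt_0).
  assert (H := is_RInt_minus _ _ _ _ _ _ is_RInt_sin_cos_kernel (is_RInt_one_minus_sin_odd_sum N)).
  destruct (is_RInt_const_bounds _ 0 (PI / 2) _ 0 (2 * central_ratio (S N)) ltac:(lra) H)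
    as [Hlo Hhi].
  - intros t Ht; apply sin_cos_kernel_sub_odd_sum_bounds, Ht.
  - cbn in Hlo, Hhi; split; lra.
Qed.

(* [geom_sum x m u = (1 - (1 - u/x)^m) / u] (lemma [geom_sum_mul]), kept as a finite sum so
   that it is smooth at [u = 0]; [log_sum x m] is a primitive of it. *)
Fixpoint geom_sum (x : R) (m : nat) (u : R) : R :=
  match m with O => 0 | S k => geom_sum x k u + / x * (1 - u / x) ^ k end.

Fixpoint log_sum (x : R) (m : nat) (u : R) : R :=
  match m with O => 0 | S k => log_sum x k u - (1 - u / x) ^ S k / INR (S k) end.

Lemma is_derive_log_sum x m u : x <> 0 -> is_derive (log_sum x m) u (geom_sum x m u).
Proof.
  intros Hx; induction m as [|m IH]; [apply (is_derive_const 0)|].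
  assert (Hterm : is_derive (fun u => - ((1 - u / x) ^ S m / INR (S m))) u (/ x * (1 - u / x) ^ m)).
  { assert (Hm : INR (S m) <> 0) by (apply not_0_INR; lia).
    auto_derive; [auto|].
    change (match m with 0%nat => 1 | S _ => INR m + 1 end) with (INR (S m)).
    replace (1 + - (u * / x)) with (1 - u / x) by (unfold Rdiv; ring); field; auto. }
  refine (is_derive_ext _ _ _ _ _ (is_derive_plus _ _ _ _ _ IH Hterm)).
  intros v; cbn [log_sum]; cbn; ring.
Qed.

Lemma ex_derive_geom_sum x m u : ex_derive (geom_sum x m) u.
Proof.
  induction m as [|m IH]; [apply ex_derive_const|].
  apply (ex_derive_plus (geom_sum x m) (fun u => / x * (1 - u / x) ^ m)); [exact IH|].
  auto_derive; auto.
Qed.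

Lemma is_RInt_geom_sum x m a b : x <> 0 -> a <= b ->
  is_RInt (geom_sum x m) a b (log_sum x m b - log_sum x m a).
Proof.
  intros Hx Hab; apply is_RInt_derive_le; auto.
  - intros u _; apply is_derive_log_sum, Hx.
  - intros u _; apply continuous_of_ex_derive, ex_derive_geom_sum.
Qed.

Lemma log_sum_self x m : x <> 0 -> log_sum x m x = 0.
Proof.
  intros Hx; induction m as [|m IH]; [reflexivity|].
  cbn [log_sum]; rewrite IH; replace (1 - x / x) with 0 by (field; auto).
  rewrite pow_i by lia; unfold Rdiv; ring.
Qed.

Lemma log_sum_0 x m : log_sum x m 0 = - harmonic m.
Proof.
  induction m as [|m IH]; [simpl; ring|].
  cbn [log_sum harmonic]; rewrite IH.
  replace (1 - 0 / x) with 1 by (unfold Rdiv; ring); rewrite pow1; unfold Rdiv; ring.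
Qed.

Lemma geom_sum_mul x m u : x <> 0 -> geom_sum x m u * u = 1 - (1 - u / x) ^ m.
Proof.
  intros Hx; induction m as [|m IH]; [simpl; ring|].
  cbn [geom_sum]; rewrite Rmult_plus_distr_r, IH, <- tech_pow_Rmult; field; auto.
Qed.

Lemma geom_sum_bounds x m u : 0 < x -> 0 <= u <= x -> 0 <= geom_sum x m u <= INR m / x.
Proof.
  intros Hx Hu.
  assert (Hq : 0 <= 1 - u / x <= 1).
  { assert (0 <= u / x) by (apply Rcomplements.Rdiv_le_0_compat; lra).
    assert (u / x <= 1) by (apply Rcomplements.Rle_div_l; lra).
    lra. }
  assert (Hinv : 0 < / x) by (apply Rinv_0_lt_compat, Hx).
  induction m as [|m IH]; [simpl; unfold Rdiv; lra|].
  assert (Hpow : 0 <= (1 - u / x) ^ m <= 1)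
    by (split; [apply pow_le|rewrite <- (pow1 m) at 2; apply pow_incr]; lra).
  cbn [geom_sum]; rewrite S_INR; unfold Rdiv in *; split; nra.
Qed.

Lemma bernoulli_ineq y n : -1 <= y -> 1 + INR n * y <= (1 + y) ^ n.
Proof.
  intros Hy; induction n as [|n IH]; [simpl; lra|].
  rewrite <- tech_pow_Rmult, S_INR; assert (Hn := pos_INR n).
  apply Rle_trans with ((1 + y) * (1 + INR n * y)); [nra|apply Rmult_le_compat_l; lra].
Qed.

Lemma pow_le_exp_mul y n : -1 <= y -> (1 + y) ^ n <= exp (INR n * y).
Proof.
  intros Hy; apply Rle_trans with (exp y ^ n).
  - apply pow_incr; split; [lra|apply exp_ineq1_le].
  - induction n as [|n IH]; [simpl; rewrite Rmult_0_l, exp_0; lra|].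
    rewrite <- tech_pow_Rmult, S_INR, Rmult_plus_distr_r, Rmult_1_l, Rplus_comm, exp_plus.
    apply Rmult_le_compat_l; [apply Rlt_le, exp_pos|exact IH].
Qed.

Section ExpApprox.

Variables (n : nat) (u : R).
Hypothesis (Hn : (0 < n)%nat) (Hu : 0 <= u <= INR n).

Let Hpos : 0 < INR n.
Proof. apply lt_0_INR, Hn. Qed.

Let Hratio : 0 <= u / INR n <= 1.
Proof.
  split; [apply Rcomplements.Rdiv_le_0_compat; lra|apply Rcomplements.Rle_div_l; lra].
Qed.

Lemma pow_one_sub_div_le_exp : (1 - u / INR n) ^ n <= exp (- u).
Proof.
  replace (1 - u / INR n) with (1 + - (u / INR n)) by ring.
  replace (- u) with (INR n * - (u / INR n)) by (field; lra).
  apply pow_le_exp_mul; lra.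
Qed.

Lemma exp_mul_le_pow_one_sub_div : exp (- u) * (1 - u ^ 2 / INR n) <= (1 - u / INR n) ^ n.
Proof.
  assert (Hplus : (1 + u / INR n) ^ n <= exp u).
  { replace u with (INR n * (u / INR n)) at 2 by (field; lra).
    apply pow_le_exp_mul; lra. }
  assert (Hsq : 1 - u ^ 2 / INR n <= (1 - u / INR n) ^ n * (1 + u / INR n) ^ n).
  { rewrite <- Rpow_mult_distr.
    replace (1 - u ^ 2 / INR n) with (1 + INR n * - ((u / INR n) ^ 2)) by (field; lra).
    replace ((1 - u / INR n) * (1 + u / INR n)) with (1 + - ((u / INR n) ^ 2)) by ring.
    apply bernoulli_ineq; nra. }
  assert (Hpow : 0 <= (1 - u / INR n) ^ n) by (apply pow_le; lra).
  assert (Hexp : exp (- u) * exp u = 1) by (rewrite <- exp_plus, Rplus_opp_l; apply exp_0).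
  apply Rle_trans with (exp (- u) * ((1 - u / INR n) ^ n * exp u)).
  - apply Rmult_le_compat_l; [apply Rlt_le, exp_pos|].
    apply Rle_trans with (1 := Hsq), Rmult_le_compat_l; assumption.
  - right; rewrite Rmult_comm, Rmult_assoc, (Rmult_comm (exp u)), Hexp; ring.
Qed.

End ExpApprox.

Lemma exp_sub_pow_div_integral_bounds n a D : (0 < n)%nat -> 0 < a <= INR n ->
  is_RInt (fun u => (exp (- u) - (1 - u / INR n) ^ n) / u) a (INR n) D -> 0 <= D <= / INR n.
Proof.
  intros Hn Ha HD; set (x := INR n) in *.
  assert (Hx : 0 < x) by (apply lt_0_INR, Hn).
  assert (Hdom : is_RInt (fun u => u * exp (- u) / x) a x
                   ((- (x + 1) * exp (- x) / x) - (- (a + 1) * exp (- a) / x))).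
  { apply (is_RInt_derive_le (fun u => - (u + 1) * exp (- u) / x)); [lra| |].
    - intros u _; auto_derive; [lra|field; lra].
    - intros u _; apply continuous_of_ex_derive; auto_derive; lra. }
  split.
  - replace 0 with ((x - a) * 0) by ring.
    apply (is_RInt_le (fun _ => 0) _ a x _ _ ltac:(lra)
             (is_RInt_const (V := R_NormedModule) _ _ 0) HD).
    intros u Hu; apply Rcomplements.Rdiv_le_0_compat; [|lra].
    assert (H := pow_one_sub_div_le_exp n u Hn ltac:(unfold x in *; lra)); fold x in H; lra.
  - apply Rle_trans with ((- (x + 1) * exp (- x) / x) - (- (a + 1) * exp (- a) / x)).
    + apply (is_RInt_le _ _ a x _ _ ltac:(lra) HD Hdom).
      intros u Hu.
      assert (H := exp_mul_le_pow_one_sub_div n u Hn ltac:(unfold x in *; lra)); fold x in H.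
      apply Rcomplements.Rle_div_l; [lra|].
      replace (u * exp (- u) / x * u) with (exp (- u) * (u ^ 2 / x)) by (field; lra); lra.
    + assert (Hxe : 0 <= (x + 1) * exp (- x)) by (apply Rmult_le_pos; [lra|apply Rlt_le, exp_pos]).
      assert (Hae : (a + 1) * exp (- a) <= 1).
      { rewrite exp_Ropp; apply Rcomplements.Rle_div_l; [apply exp_pos|].
        generalize (exp_ineq1_le a); lra. }
      unfold Rdiv; assert (Hinv : 0 < / x) by (apply Rinv_0_lt_compat, Hx); nra.
Qed.

Lemma harmonic_sub_ln_add_integral_bound n a J : (0 < n)%nat -> 0 < a < 1 ->
  is_RInt (fun u => ln u * exp (- u)) a (INR n) J ->
  Rabs (harmonic n - ln (INR n) + J)
    <= ln (INR n) * exp (- INR n) - ln a * (1 - exp (- a)) + / INR n + a.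
Proof.
  intros Hn Ha HJ; set (x := INR n) in *.
  assert (Hx : 1 <= x) by (apply (le_INR 1), Hn).
  assert (Hparts : is_RInt (fun u => ln u * exp (- u) + (1 - exp (- u)) / u) a x
                     (ln x * (1 - exp (- x)) - ln a * (1 - exp (- a)))).
  { apply (is_RInt_derive_le (fun u => ln u * (1 - exp (- u)))); [lra| |].
    - intros u Hu; auto_derive; [lra|field; lra].
    - intros u Hu; apply continuous_of_ex_derive; auto_derive; repeat split; lra. }
  assert (Hhead := is_RInt_geom_sum x n 0 a ltac:(lra) ltac:(lra)).
  assert (Htail := is_RInt_geom_sum x n a x ltac:(lra) ltac:(lra)).
  rewrite log_sum_0 in Hhead; rewrite log_sum_self in Htail by lra.
  assert (HD := is_RInt_minus _ _ _ _ _ _ HJ (is_RInt_minus _ _ _ _ _ _ Hparts Htail)).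
  apply (is_RInt_ext_le _ (fun u => (exp (- u) - (1 - u / x) ^ n) / u)) in HD; [|lra|].
  2:{ intros u Hu; assert (Hg := geom_sum_mul x n u ltac:(lra)).
      replace (geom_sum x n u) with ((1 - (1 - u / x) ^ n) / u) by (rewrite <- Hg; field; lra).
      cbn; field; lra. }
  destruct (exp_sub_pow_div_integral_bounds n a _ Hn ltac:(unfold x in *; lra) HD) as [HD0 HD1].
  destruct (is_RInt_const_bounds _ 0 a _ 0 1 ltac:(lra) Hhead) as [Hv0 Hv1].
  { intros u Hu; replace 1 with (x / x) by (field; lra); apply geom_sum_bounds; lra. }
  assert (Hlnx : 0 <= ln x) by (rewrite <- ln_1; apply ln_le; lra).
  assert (Hlna : ln a < 0) by (rewrite <- ln_1; apply ln_increasing; lra).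
  assert (Hexpa : 0 <= 1 - exp (- a))
    by (assert (exp (- a) < exp 0) by (apply exp_increasing; lra); rewrite exp_0 in *; lra).
  assert (Hexpx : 0 <= ln x * exp (- x)) by (apply Rmult_le_pos; [lra|apply Rlt_le, exp_pos]).
  assert (Hlna' : 0 <= - ln a * (1 - exp (- a))) by (apply Rmult_le_pos; lra).
  cbn in HD0, HD1.
  fold x in HD1; apply Rabs_le; split; lra.
Qed.

Lemma ln_mul_exp_neg_le x : 1 <= x -> ln x * exp (- x) <= 4 / x.
Proof.
  intros Hx.
  assert (Hln : ln x <= x) by (generalize (exp_ineq1_le (ln x)); rewrite exp_ln by lra; lra).
  assert (Hexp : x * x / 4 <= exp x).
  { replace (exp x) with (exp (x / 2) * exp (x / 2)) by (rewrite <- exp_plus; f_equal; field).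
    generalize (exp_ineq1_le (x / 2)); nra. }
  assert (Hpos := exp_pos x).
  rewrite exp_Ropp.
  replace (ln x * / exp x) with (x * ln x / (x * exp x)) by (field; lra).
  replace (4 / x) with (4 * exp x / (x * exp x)) by (field; lra).
  apply Rmult_le_compat_r; [apply Rlt_le, Rinv_0_lt_compat; nra|nra].
Qed.

Lemma neg_ln_sqr_mul_one_sub_exp_le d : 0 < d < 1 -> - ln (d ^ 2) * (1 - exp (- d ^ 2)) <= 2 * d.
Proof.
  intros Hd.
  assert (Hln : - ln d <= / d).
  { rewrite <- ln_Rinv by lra.
    generalize (exp_ineq1_le (ln (/ d))); rewrite exp_ln by (apply Rinv_0_lt_compat; lra); lra. }
  assert (Hexp : 1 - exp (- d ^ 2) <= d ^ 2) by (generalize (exp_ineq1_le (- d ^ 2)); lra).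
  assert (Hexp0 : 0 <= 1 - exp (- d ^ 2)).
  { assert (exp (- d ^ 2) < exp 0) by (apply exp_increasing; nra). rewrite exp_0 in *; lra. }
  rewrite ln_pow by lra; simpl INR.
  apply Rle_trans with (2 * / d * d ^ 2).
  - replace (- (2 * ln d)) with (2 * - ln d) by ring.
    assert (ln d < 0) by (rewrite <- ln_1; apply ln_increasing; lra).
    apply Rmult_le_compat; lra.
  - right; field; lra.
Qed.

Lemma harmonic_sub_ln_cvg g : is_euler_gamma g -> is_lim_seq (fun n => harmonic n - ln (INR n)) g.
Proof.
  intros hg; apply is_lim_seq_spec; intros eps; assert (He := cond_pos eps).
  destruct (hg (eps / 5) ltac:(lra)) as [d [M [Hd [_ Hint]]]].
  set (delta := Rmin (1 / 2) (Rmin (eps / 10) d)).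
  assert (Hdelta0 : 0 < delta) by (apply Rmin_pos; [lra|apply Rmin_pos; lra]).
  assert (Hdelta1 : delta <= 1 / 2) by apply Rmin_l.
  assert (Hdelta_eps : delta <= eps / 10)
    by (eapply Rle_trans; [apply Rmin_r|apply Rmin_l]).
  assert (Hdelta_d : delta <= d) by (eapply Rle_trans; [apply Rmin_r|apply Rmin_r]).
  assert (Hinfty := proj2 (is_lim_seq_spec _ _) is_lim_seq_INR).
  assert (Hinv := proj2 (is_lim_seq_spec _ _) is_lim_seq_inv_INR (mkposreal (eps / 20) ltac:(lra))).
  apply (filter_imp (fun n => (1 < INR n /\ M < INR n) /\ Rabs (/ INR n - 0) < eps / 20));
    [|repeat apply filter_and; auto].
  intros n [[Hn1 HnM] Hn_eps]; simpl in Hn_eps.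
  rewrite Rminus_0_r, Rabs_pos_eq in Hn_eps by (apply Rlt_le, Rinv_0_lt_compat; lra).
  assert (Hn : (0 < n)%nat) by (apply INR_lt; simpl; lra).
  destruct (Hint (delta ^ 2) (INR n) ltac:(nra) HnM) as [pr Hpr].
  assert (Hbound := harmonic_sub_ln_add_integral_bound n (delta ^ 2) _ Hn ltac:(nra)
                      (ex_RInt_Reals_aux_1 _ _ _ pr)).
  assert (Hlnx := ln_mul_exp_neg_le (INR n) ltac:(lra)).
  assert (Hlna := neg_ln_sqr_mul_one_sub_exp_le delta ltac:(lra)).
  replace (harmonic n - ln (INR n) - g)
    with ((harmonic n - ln (INR n) + RiemannInt pr) - (RiemannInt pr - - g)) by ring.
  eapply Rle_lt_trans; [apply Rabs_triang|]; rewrite Rabs_Ropp.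
  unfold Rdiv in Hlnx; nra.
Qed.

Lemma PI_mul_R_N_sub_harmonic_cvg :
  is_lim_seq (fun N => PI * R_N N - (harmonic N - PI + 4 * ln 2)) 0.
Proof.
  apply (is_lim_seq_le_le (fun _ => 0) _ (fun N => PI * central_ratio (S N))).
  - intros N; apply PI_mul_R_N_bounds.
  - apply is_lim_seq_const.
  - replace (Finite 0) with (Finite (PI * 0)) by (f_equal; ring).
    apply is_lim_seq_mult'; [apply is_lim_seq_const|].
    apply (is_lim_seq_incr_1 central_ratio), is_lim_seq_central_ratio.
Qed.

Theorem mainTheorem11 (g : R) (hg : is_euler_gamma g) :
  Un_cv (fun N : nat => R_N N - (ln (INR N) + alpha g) / PI) 0.
Proof.
  assert (HP := PI_RGT_0).
  apply is_lim_seq_Reals.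
  apply is_lim_seq_ext with
    (fun N => (harmonic N - ln (INR N) + (PI * R_N N - (harmonic N - PI + 4 * ln 2)) - g) / PI).
  - intros N; unfold alpha.
    replace 16 with (2 ^ 4) by ring; rewrite ln_pow by lra; simpl INR; field; lra.
  - replace (Finite 0) with (Finite ((g + 0 - g) / PI)) by (f_equal; field; lra).
    apply is_lim_seq_div'; [|apply is_lim_seq_const|lra].
    apply is_lim_seq_minus'; [|apply is_lim_seq_const].
    apply is_lim_seq_plus'; [apply harmonic_sub_ln_cvg, hg|apply PI_mul_R_N_sub_harmonic_cvg].
Qed.
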